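(* Let $T$ be a tree with colour classes $A$ and $B$ such that $a=|A|\le|B|$ and $k=\min\{d_T(x):x\in A\}\ge 2$. Let $\tilde T\in\mathcal{H}(T)$ be obtained from $T$ by a vertex split on a set $U\subseteq V(T)$, and let $S=U\cap A$ be the set of splitting vertices in $A$, $s=|S|$. If $s\ge 1$, then $\nu(\tilde T)\ge a-1+k$.
   Context: $\nu(G)$ is the matching number. A vertex split on a vertex $v$ of $H$ replaces $v$ by an independent set of $d(v)$ new vertices, each adjacent to exactly one vertex of $N_H(v)$, distinct new vertices adjacent to distinct neighbours; a vertex split on $U\subseteq V(H)$ applies this to the vertices of $U$ one by one. The splitting family $\mathcal{H}(H)$ is the family of all graphs obtained from $H$ by a vertex split on some $U\subseteq V(H)$. *)

From mathcomp Require Import all_boot.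
Set Implicit Arguments. Unset Strict Implicit. Unset Printing Implicit Defensive.

Section Defs.
Variable V : finType.
Implicit Types (e : rel V) (A B U : {set V}).

Definition deg e (x : V) : nat := #|[set y | e x y]|.

Definition simple_graph e := symmetric e /\ irreflexive e.

Definition connected_graph e := forall x y : V, connect e x y.

Definition acyclic e :=
  forall c : seq V, uniq c -> 3 <= size c -> ~~ cycle e c.

Definition is_tree e :=
  [/\ simple_graph e, 0 < #|V|, connected_graph e & acyclic e].

Definition colour_classes e A B :=
  [/\ A :&: B = set0, A :|: B = setT &
      forall x y, e x y -> ((x \in A) && (y \in B)) || ((x \in B) && (y \in A))].

(* Vertices of the split graph:
   (v, None)    for v \notin U  (the vertex v itself), and
   (v, Some w)  for v \in U and w a neighbour of v  (the new vertex of v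
                attached to w). *)
Definition split_vert e U (x : V * option V) : bool :=
  match x.2 with
  | None => x.1 \notin U
  | Some w => (x.1 \in U) && e x.1 w
  end.

Definition split_copy U (u v : V) : V * option V :=
  if u \in U then (u, Some v) else (u, None).

(* each edge uv of T becomes the edge between the copy of u for v and the copy of v for u *)
Definition split_edge e U (x y : V * option V) : bool :=
  [&& e x.1 y.1, x == split_copy U x.1 y.1 & y == split_copy U y.1 x.1].

Definition split_graph e U : rel {x : V * option V | split_vert e U x} :=
  fun x y => split_edge e U (val x) (val y).

End Defs.
Arguments split_graph {V} e U.
Arguments split_vert {V} e U x.

Section Matching.
Variable W : finType.
Variable r : rel W.

Definition is_matching (M : {set {set W}}) : bool :=
  [forall f in M, exists x, exists y, r x y && (f == [set x; y])] &&
  [forall f in M, forall g in M, (f != g) ==> [disjoint f & g]].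

Definition matching_number : nat :=
  \max_(M : {set {set W}} | is_matching M) #|M|.
End Matching.

From mathcomp Require Import all_boot.
Set Implicit Arguments. Unset Strict Implicit. Unset Printing Implicit Defensive.

(* Root the tree at a split vertex s of A.  Take all deg(s) >= k edges at s
   and, for every other x in A, one edge from x to a child of x: a child
   exists because deg(x) >= 2 while x has at most one neighbour closer to s.
   Two of these deg(s) + a - 1 edges can meet only in s, since each joins a
   vertex of A to one of its children and children have unique parents; as s
   is split, their images in the split tree are pairwise disjoint. *)

Section AcyclicGraph.
Variables (V : finType) (e : rel V).
Hypotheses (e_sym : symmetric e) (e_irr : irreflexive e) (e_acyc : acyclic e).

Definition avoid (x : V) : rel V := [rel a b | [&& e a b, a != x & b != x]].

Lemma path_avoid x a p : path (avoid x) a p -> x \notin p.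
Proof.
elim: p a => //= b p IHp a /andP[/and3P[_ _ bx] /IHp].
by rewrite inE negb_or eq_sym bx.
Qed.

Lemma avoid_sym x : symmetric (avoid x).
Proof. by move=> a b; rewrite /avoid /= e_sym [(a != x) && _]andbC. Qed.

Lemma acyclic_nbrs_avoid x y1 y2 :
  e x y1 -> e x y2 -> y1 != y2 -> ~~ connect (avoid x) y1 y2.
Proof.
move=> xy1 xy2 y12; apply/negP => /connectP[p p_path p_last].
case/shortenP: p_path p_last => q q_path q_uniq _ q_last.
have y1x : y1 != x by apply: contraTneq xy1 => ->; rewrite e_irr.
have q_ne0 : q != [::] by apply: contra_neq y12; rewrite q_last => ->.
have c_uniq : uniq (x :: y1 :: q).
  by rewrite cons_uniq q_uniq andbT inE negb_or eq_sym y1x (path_avoid q_path).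
have c_size : 3 <= size (x :: y1 :: q).
  by case: q q_ne0 {q_path q_uniq q_last c_uniq}.
have := e_acyc c_uniq c_size.
rewrite /cycle rcons_cons /= xy1 rcons_path -q_last e_sym xy2 andbT.
by rewrite (sub_path _ q_path) // => a b /and3P[].
Qed.
End AcyclicGraph.

Section RootedTree.
Variables (V : finType) (e : rel V) (s : V).
Hypotheses (e_sym : symmetric e) (e_irr : irreflexive e)
  (e_conn : connected_graph e) (e_acyc : acyclic e).

Definition grow (X : {set V}) := X :|: [set y | [exists x in X, e x y]].
Definition ball n := iter n grow [set s].

Lemma ball_mono m n : m <= n -> ball m \subset ball n.
Proof.
move=> /subnKC <-; elim: (n - m) => [|j IHj]; first by rewrite addn0.
by rewrite addnS; apply: subset_trans IHj (subsetUl _ _).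
Qed.

Lemma ball_edge n x y : x \in ball n -> e x y -> y \in ball n.+1.
Proof.
by move=> xn xy; rewrite /= !inE; apply/orP; right; apply/exists_inP; exists x.
Qed.

Lemma ball_path n x p : path e x p -> x \in ball n -> last x p \in ball (n + size p).
Proof.
elim: p x n => [|y p IHp] x n /=; first by rewrite addn0.
by move=> /andP[xy yp] xn; rewrite addnS -addSn; apply: IHp yp (ball_edge xn xy).
Qed.

Lemma exists_ball x : exists n, x \in ball n.
Proof.
have /connectP[p p_path ->] := e_conn s x.
by exists (0 + size p); apply: ball_path p_path _; rewrite inE.
Qed.

Definition dist x := ex_minn (exists_ball x).

Lemma mem_ball n x : (x \in ball n) = (dist x <= n).
Proof.
rewrite /dist; case: ex_minnP => m xm m_min; apply/idP/idP; first exact: m_min.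
by move=> /ball_mono/subsetP; apply.
Qed.

Lemma dist_eq0 x : (dist x == 0) = (x == s).
Proof. by rewrite -leqn0 -mem_ball inE. Qed.

Lemma dist_edge x y : e x y -> dist y <= (dist x).+1.
Proof. by move=> xy; rewrite -mem_ball; apply: ball_edge xy; rewrite mem_ball. Qed.

Lemma dist_parent x n : dist x = n.+1 -> exists2 y, e y x & dist y = n.
Proof.
move=> xn; have := leqnn (dist x); rewrite -{1}mem_ball xn /= !inE mem_ball xn ltnn.
case/exists_inP=> y; rewrite mem_ball => yn yx; exists y => //.
by apply/eqP; rewrite eqn_leq yn -ltnS -xn dist_edge.
Qed.

Lemma dist_root_nbr y : e s y -> dist y = (dist s).+1.
Proof.
move=> sy; have := dist_edge sy; have /eqP -> : dist s == 0 by rewrite dist_eq0.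
have : dist y != 0 by rewrite dist_eq0; apply: contraTneq sy => ->; rewrite e_irr.
by case: (dist y) => [|[|n]].
Qed.

Lemma connect_avoid_root x y : y != x -> dist y <= dist x -> connect (avoid e x) y s.
Proof.
elim: {y}(dist y) {-2}y (erefl (dist y)) => [|n IHn] y yn yx ynx.
  by move/eqP: yn; rewrite dist_eq0 => /eqP->.
have [z zy zn] := dist_parent yn.
have zx : z != x by apply: contraTneq ynx => <-; rewrite yn zn ltnn.
apply: connect_trans (IHn z zn zx _); last by rewrite zn; apply: ltnW; rewrite -yn.
by apply: connect1; rewrite /avoid /= e_sym zy zx yx.
Qed.

Lemma nbr_uniq_below x y1 y2 : e x y1 -> e x y2 ->
  dist y1 <= dist x -> dist y2 <= dist x -> y1 = y2.
Proof.
move=> xy1 xy2 y1x y2x; case: (eqVneq y1 y2) => // y12.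
have /negP[] := acyclic_nbrs_avoid e_sym e_irr e_acyc xy1 xy2 y12.
have nbr_neq y : e x y -> y != x.
  by move=> xy; apply: contraTneq xy => ->; rewrite e_irr.
apply: connect_trans (connect_avoid_root (nbr_neq _ xy1) y1x) _.
by rewrite (sym_connect_sym (avoid_sym e_sym x)) connect_avoid_root ?nbr_neq.
Qed.

Lemma parent_uniq x1 x2 y : e x1 y -> e x2 y ->
  dist y = (dist x1).+1 -> dist y = (dist x2).+1 -> x1 = x2.
Proof.
rewrite ![e _ y]e_sym => yx1 yx2 y1 y2.
by apply: (nbr_uniq_below yx1 yx2); [rewrite y1 | rewrite y2]; apply: leqnSn.
Qed.

Lemma exists_child x : 1 < deg e x -> exists2 y, e x y & dist y = (dist x).+1.
Proof.
case/card_gt1P=> y1 [y2 [xy1 xy2 y12]]; rewrite !inE in xy1 xy2.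
suff [y xy x_lt_y] : exists2 y, e x y & dist x < dist y.
  by exists y => //; apply/eqP; rewrite eqn_leq dist_edge.
have [y1x | x_lt_y1] := leqP (dist y1) (dist x); last by exists y1.
have [y2x | x_lt_y2] := leqP (dist y2) (dist x); last by exists y2.
by rewrite (nbr_uniq_below xy1 xy2 y1x y2x) eqxx in y12.
Qed.

Definition child x := odflt x [pick y | e x y && (dist y == (dist x).+1)].

Lemma child_spec x : 1 < deg e x -> e x (child x) /\ dist (child x) = (dist x).+1.
Proof.
move=> x_deg; rewrite /child; case: pickP => [y /andP[xy /eqP]|no_child] //=.
have [y xy y_dist] := exists_child x_deg.
by move: (no_child y); rewrite /= xy y_dist eqxx.
Qed.
End RootedTree.

Section SplitMatching.
Variables (V : finType) (e : rel V) (U : {set V}).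
Hypothesis e_sym : symmetric e.

Local Notation split_vertex := {x : V * option V | split_vert e U x}.

Lemma split_copy_fst u v : (split_copy U u v).1 = u.
Proof. by rewrite /split_copy; case: ifP. Qed.

Lemma split_copyP u v u' v' : split_copy U u v = split_copy U u' v' ->
  u = u' /\ (u \in U -> v = v').
Proof. by rewrite /split_copy; do 2!case: ifP => ? //; case=> -> //= ->. Qed.

Lemma split_vert_copy u v : e u v -> split_vert e U (split_copy U u v).
Proof. by rewrite /split_vert /split_copy; case: ifP => //= ->. Qed.

Definition split_image (p : V * V) : {set split_vertex} :=
  [set w | (val w == split_copy U p.1 p.2) || (val w == split_copy U p.2 p.1)].

Lemma split_image_edge p : e p.1 p.2 ->
  [exists x, exists y, split_graph e U x y && (split_image p == [set x; y])].
Proof.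
move=> p_edge; have p_edge' : e p.2 p.1 by rewrite e_sym.
apply/existsP; exists (exist (split_vert e U) _ (split_vert_copy p_edge)).
apply/existsP; exists (exist (split_vert e U) _ (split_vert_copy p_edge')).
rewrite /split_graph /split_edge /= !split_copy_fst p_edge !eqxx /=.
by apply/eqP/setP => w; rewrite !inE -!val_eqE.
Qed.

Variable F : {set V * V}.
Hypotheses (F_edge : {in F, forall p, e p.1 p.2})
  (F_oriented : {in F &, forall p q, p.1 != q.2})
  (F_tail : {in F &, forall p q, p.1 = q.1 -> p.1 \notin U -> p = q})
  (F_head : {in F &, forall p q, p.2 = q.2 -> p.2 \notin U -> p = q}).

Lemma split_image_meet p q w : p \in F -> q \in F ->
  w \in split_image p -> w \in split_image q -> p = q.
Proof.
move=> Fp Fq; rewrite !inE => /orP[]/eqP-> /orP[]/eqP/split_copyP[].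
- move=> p1q1 p2q2; have [/p2q2|pU] := boolP (p.1 \in U); last exact: F_tail.
  exact: injective_projections _ _ p1q1.
- by move/eqP: (F_oriented Fp Fq).
- by move/eqP: (F_oriented Fq Fp) => /[swap] ->.
- move=> p2q2 p1q1; have [/p1q1|pU] := boolP (p.2 \in U); last exact: F_head.
  by move/(injective_projections p q); apply.
Qed.

Lemma split_image_matching : is_matching (split_graph e U) (split_image @: F).
Proof.
apply/andP; split; apply/forall_inP => _ /imsetP[p Fp ->].
  exact/split_image_edge/F_edge.
apply/forall_inP => _ /imsetP[q Fq ->]; apply/implyP => pq.
apply/pred0P => w /=; apply/negbTE/andP => -[wp wq].
by rewrite (split_image_meet Fp Fq wp wq) eqxx in pq.
Qed.

Lemma card_split_image : #|split_image @: F| = #|F|.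
Proof.
apply: card_in_imset => p q Fp Fq pq.
pose w := exist (split_vert e U) _ (split_vert_copy (F_edge Fp)).
have wp : w \in split_image p by rewrite inE eqxx.
by apply: (split_image_meet Fp Fq wp); rewrite -pq.
Qed.

Lemma split_matching_number : #|F| <= matching_number (split_graph e U).
Proof.
rewrite -card_split_image; exact: leq_bigmax_cond split_image_matching.
Qed.
End SplitMatching.

Lemma colour_classes_edge (V : finType) (e : rel V) (A B : {set V}) :
  colour_classes e A B -> {in A, forall x y, e x y -> y \notin A}.
Proof.
case=> AB0 _ AB_edge x xA y xy; apply/negP => yA.
have notAB z : z \in A -> z \in B -> False.
  by move=> zA zB; have := in_set0 z; rewrite -AB0 inE zA zB.
by case/orP: (AB_edge _ _ xy) => /andP[] => [_ /(notAB _ yA) | /(notAB _ xA)].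
Qed.

Section StarAndChildren.
Variables (V : finType) (e : rel V) (A U : {set V}) (s : V).
Hypotheses (e_sym : symmetric e) (e_irr : irreflexive e)
  (e_conn : connected_graph e) (e_acyc : acyclic e).
Hypotheses (sA : s \in A) (sU : s \in U)
  (A_indep : {in A, forall x y, e x y -> y \notin A})
  (A_deg : {in A, forall x, 1 < deg e x}).

Local Notation dist := (dist s e_conn).
Local Notation child := (child s e_conn).

Definition star_child_edges :=
  [set (s, y) | y in [set y | e s y]] :|: [set (x, child x) | x in A :\ s].

Lemma star_child_edgesP p : p \in star_child_edges ->
  [/\ p.1 \in A, e p.1 p.2, dist p.2 = (dist p.1).+1 & p.1 != s -> p.2 = child p.1].
Proof.
case/setUP=> /imsetP[x]; rewrite !inE; [move=> sx -> | move=> /andP[xs xA] ->] => /=.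
  by split=> //; [apply: dist_root_nbr | rewrite eqxx].
by have [] := child_spec s e_sym e_irr e_conn e_acyc (A_deg xA).
Qed.

Lemma card_star_child_edges : #|star_child_edges| = deg e s + (#|A| - 1).
Proof.
rewrite cardsU card_imset; last by move=> y y' [].
rewrite card_imset; last by move=> x x' [].
rewrite (cardsD1 s A) sA add1n subn1 /=.
suff -> : [set (s, y) | y in [set y | e s y]] :&: [set (x, child x) | x in A :\ s]
    = set0 by rewrite cards0 subn0.
apply/setP => p; rewrite !inE; apply/andP => -[/imsetP[y _ ->] /imsetP[x]].
by rewrite !inE => /andP[xs _] [sx _]; rewrite sx eqxx in xs.
Qed.

Lemma star_child_matching :
  deg e s + (#|A| - 1) <= matching_number (split_graph e U).
Proof.
rewrite -card_star_child_edges.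
apply: (split_matching_number e_sym).
- by move=> p /star_child_edgesP[].
- move=> p q /star_child_edgesP[p1A _ _ _] /star_child_edgesP[q1A q_edge _ _].
  by apply: contraTneq p1A => ->; apply: A_indep q1A _ q_edge.
- move=> p q /star_child_edgesP[_ _ _ p_child] /star_child_edgesP[_ _ _ q_child].
  move=> pq1 p1U.
  have p1s : p.1 != s by apply: contraNneq p1U => ->.
  by apply: (injective_projections _ _ pq1); rewrite p_child // q_child -pq1.
- move=> p q /star_child_edgesP[_ p_edge p_dist _].
  move=> /star_child_edgesP[_ q_edge q_dist _] pq2 _.
  rewrite -pq2 in q_edge q_dist; apply: (injective_projections _ _ _ pq2).
  exact: (parent_uniq e_sym e_irr e_acyc p_edge q_edge p_dist q_dist).
Qed.
End StarAndChildren.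

Theorem lemma2p5 (V : finType) (e : rel V) (A B U : {set V}) (k : nat) :
  is_tree e ->
  colour_classes e A B ->
  #|A| <= #|B| ->
  (exists2 x, x \in A & deg e x = k) ->
  (forall x, x \in A -> k <= deg e x) ->
  2 <= k ->
  1 <= #|U :&: A| ->
  #|A| - 1 + k <= matching_number (split_graph e U).
Proof.
move=> [[e_sym e_irr] _ e_conn e_acyc] AB _ _ k_deg k2 /card_gt0P[s].
rewrite inE => /andP[sU sA].
have A_deg x : x \in A -> 1 < deg e x by move=> /k_deg; apply: leq_trans.
have := star_child_matching e_sym e_irr e_conn e_acyc sA sU
  (colour_classes_edge AB) A_deg.
by apply: leq_trans; rewrite addnC leq_add2r k_deg.
Qed.
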